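(* Let $m\geq 3$ be an odd integer and $\ell=\lceil\log_2 m\rceil$. Suppose there is a positive integer $j$ such that $\mathbf t_j\mathbf t_{j+1}=\mathbf t_{m+j}\mathbf t_{m+j+1}$. Then $\mathfrak K(m)<\left(1+\frac{j+1}{m}\right)2^\ell$.
   Context: The Thue–Morse word is $\mathbf t=\mathbf t_1\mathbf t_2\cdots$ where $\mathbf t_i\in\{0,1\}$ has the parity of the number of $1$'s in the binary expansion of $i-1$. For positive integers $\alpha\le\beta$, $\langle\alpha,\beta\rangle=\mathbf t_\alpha\cdots\mathbf t_\beta$. A $k$-anti-power is a word $w_1\cdots w_k$ with $w_1,\dots,w_k$ pairwise distinct words of equal length. For a positive integer $m$, $\mathfrak K(m)$ is the smallest positive integer $k$ such that the prefix $\langle 1,km\rangle$ of $\mathbf t$ is not a $k$-anti-power. *)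

From mathcomp Require Import all_boot.
Set Implicit Arguments. Unset Strict Implicit. Unset Printing Implicit Defensive.

Fixpoint popcount_aux (fuel n : nat) : nat :=
  match fuel with
  | 0 => 0
  | f.+1 => if n == 0 then 0 else odd n + popcount_aux f n./2
  end.
Definition popcount (n : nat) : nat := popcount_aux n n.

(* Thue-Morse word, 1-indexed: t_i = parity of popcount (i-1) *)
Definition tm (i : nat) : bool := odd (popcount i.-1).

(* factor <a, b> = t_a ... t_b (empty if b < a) *)
Definition factor (a b : nat) : seq bool := [seq tm i | i <- iota a (b.+1 - a)].

(* The prefix <1, k m> splits into k blocks of length m; the i-th block
   (1 <= i <= k) is <(i-1)m+1, i m>. *)
Definition block (m i : nat) : seq bool := factor ((i.-1) * m + 1) (i * m).

Definition is_anti_power (m k : nat) : bool :=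
  [forall i : 'I_k, forall i' : 'I_k,
     (i != i') ==> (block m i.+1 != block m i'.+1)].

From mathcomp Require Import all_boot zify.

(* Write L = 2^l with l = up_log 2 m; since m is odd and at least 3, m < L.
   As t(a L + r) = t(a) + t(r) mod 2 for r < L, the hypothesis t_j t_{j+1} =
   t_{m+j} t_{m+j+1} says that the factor of length 2L starting at (j-1) L
   reappears at (m+j-1) L, i.e. shifted by m L.  A multiple n m of m lies in
   [(j-1) L, (j-1) L + m), so the whole block [n m, n m + m) sits inside that
   factor, and it equals the block starting at (n + L) m.  Hence the prefix
   of n + L + 1 blocks is not an anti-power. *)

Lemma popcount_aux_fuel f g n :
  n <= f -> n <= g -> popcount_aux f n = popcount_aux g n.
Proof.
elim: f g n => [|f IHf] [|g] n //= n_le_f n_le_g; try by have -> : n = 0 by lia.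
case: eqP => // /eqP n_neq0.
by rewrite (IHf g) // -divn2; lia.
Qed.

Lemma popcountE n : popcount n = if n == 0 then 0 else odd n + popcount n./2.
Proof.
case: n => [//|n]; rewrite /popcount /=.
by rewrite (@popcount_aux_fuel n (n.+1./2)) // leq_uphalf_double -addnn leq_addr.
Qed.

Lemma popcount_double_add n (b : bool) : popcount (n.*2 + b) = popcount n + b.
Proof.
have n2bK : (n.*2 + b)./2 = n by rewrite addnC half_bit_double.
case: b n2bK => n2bK; rewrite popcountE n2bK oddD odd_double /=.
  by rewrite addn1 addnC.
by rewrite !addn0 add0n; case: n {n2bK}.
Qed.

Lemma popcount_mul_exp2_add l a r :
  r < 2 ^ l -> popcount (a * 2 ^ l + r) = popcount a + popcount r.
Proof.
elim: l r => [|l IHl] r r_lt.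
  by move: r_lt; rewrite expn0 muln1 ltnS leqn0 => /eqP ->; rewrite !addn0.
have r_half_lt : r./2 < 2 ^ l by rewrite -divn2 ltn_divLR // -expnSr.
have r_split : r = (r./2).*2 + odd r by rewrite addnC odd_double_half.
have -> : a * 2 ^ l.+1 + r = (a * 2 ^ l + r./2).*2 + odd r.
  by rewrite [in LHS]r_split expnS -!muln2; lia.
by rewrite popcount_double_add IHl // [in RHS]r_split popcount_double_add addnA.
Qed.

(* The Thue-Morse sequence indexed from 0, so that [tm i = thue_morse i.-1]. *)
Definition thue_morse n := odd (popcount n).

Lemma thue_morse_mul_exp2_add l a r :
  r < 2 ^ l -> thue_morse (a * 2 ^ l + r) = thue_morse a (+) thue_morse r.
Proof. by move=> r_lt; rewrite /thue_morse popcount_mul_exp2_add // oddD. Qed.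

Lemma thue_morse_mul_exp2_shift l a b s :
  thue_morse a = thue_morse b -> thue_morse a.+1 = thue_morse b.+1 ->
  s < 2 ^ l.+1 -> thue_morse (a * 2 ^ l + s) = thue_morse (b * 2 ^ l + s).
Proof.
move=> eq_a eq_a1 s_lt; rewrite expnS mul2n -addnn in s_lt.
have [s_lt_l | s_ge_l] := ltnP s (2 ^ l).
  by rewrite !thue_morse_mul_exp2_add // eq_a.
have shift c : c * 2 ^ l + s = c.+1 * 2 ^ l + (s - 2 ^ l) by rewrite mulSn; lia.
by rewrite !shift !thue_morse_mul_exp2_add ?eq_a1 //; lia.
Qed.

Lemma block_thue_morse m i :
  0 < i -> block m i = [seq thue_morse (i.-1 * m + t) | t <- iota 0 m].
Proof.
case: i => // i _; rewrite /block /factor /=.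
have -> : (i.+1 * m).+1 - (i * m + 1) = m by rewrite mulSn; lia.
rewrite -[i * m + 1]addn0 -addnA !iotaDl -!map_comp.
by apply: eq_map => t; rewrite /= /tm addnCA add1n.
Qed.

Lemma block_eq_not_anti_power m k i i' :
  i < i' < k -> block m i.+1 = block m i'.+1 -> ~~ is_anti_power m k.
Proof.
move=> /andP[lt_ii' lt_i'k] eq_blocks.
apply/forallP => /(_ (Ordinal (ltn_trans lt_ii' lt_i'k))).
move=> /forallP /(_ (Ordinal lt_i'k)) /implyP /=.
by rewrite neq_ltn lt_ii' eq_blocks eqxx => /(_ isT).
Qed.

Lemma odd_lt_exp2_up_log m : 1 < m -> odd m -> m < 2 ^ up_log 2 m.
Proof.
move=> m_gt1 m_odd; rewrite ltn_neqAle up_logP // andbT.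
case: (up_log 2 m) (up_log_gt0 2 m) => [|l]; first by rewrite m_gt1.
by move=> _; apply: contraTneq m_odd => ->; rewrite expnS oddM.
Qed.

Lemma exists_mul_in m a : 0 < m -> exists n, a <= n * m < a + m.
Proof.
move=> m_gt0; exists ((a + m.-1) %/ m).
have := divn_eq (a + m.-1) m; have := ltn_pmod (a + m.-1) m_gt0; lia.
Qed.

Theorem lemma4 (m j : nat) :
  3 <= m -> odd m -> 0 < j ->
  [:: tm j; tm j.+1] = [:: tm (m + j); tm (m + j).+1] ->
  exists k, [/\ 0 < k, ~~ is_anti_power m k &
             k * m < (m + j + 1) * 2 ^ up_log 2 m].
Proof.
move=> m_ge3 m_odd; case: j => // q _.
rewrite /tm !addnS /= -!/(thue_morse _) [m + q]addnC => -[eq_q eq_q1].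
set L := 2 ^ up_log 2 m.
have m_lt_L : m < L := odd_lt_exp2_up_log _ (ltnW m_ge3) m_odd.
have [n /andP[n_ge n_lt]] := exists_mul_in _ (q * L) (ltnW (ltnW m_ge3)).
have eq_blocks : block m n.+1 = block m (n + L).+1.
  rewrite !block_thue_morse //=; apply/eq_in_map => t; rewrite mem_iota => /andP[_ t_lt].
  have -> : n * m + t = q * L + (n * m - q * L + t) by lia.
  have -> : (n + L) * m + t = (q + m) * L + (n * m - q * L + t).
    by rewrite !mulnDl [L * m]mulnC; lia.
  by apply: thue_morse_mul_exp2_shift => //; rewrite expnS; lia.
exists (n + L).+1; split => //.
  by apply: block_eq_not_anti_power eq_blocks; lia.
by rewrite mulSn !mulnDl [L * m]mulnC; lia.
Qed.
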